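(* Let $R$ be a ring with unity and involution $*$, and let $a,v\in R$ with $a$ left dual $v$-core invertible. Then there exist $a_1,a_2\in R$ with $va=a_1+a_2$ such that (1) $a_1$ is left dual core invertible, (2) $a_2^2=0$, (3) $a_2^*a_1=0=a_1a_2$. In addition, for any left dual $v$-core inverse $x$ of $a$, the element $x(va)^2$ is left dual core invertible and $x$ is a left dual core inverse of it.
   Context: For $a,v\in R$, $a$ is left dual $v$-core invertible if there exists $x\in R$ such that $axva=a$, $(xva)^*=xva$ and $x^2va=x$; such $x$ is a left dual $v$-core inverse of $a$. An element $y$ is left dual core invertible if there exists $z\in R$ with $yzy=y$, $(zy)^*=zy$ and $z^2y=z$; such $z$ is a left dual core inverse of $y$. *)

From mathcomp Require Import all_boot all_algebra.
Set Implicit Arguments. Unset Strict Implicit. Unset Printing Implicit Defensive.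
Import GRing.Theory.
Local Open Scope ring_scope.

Definition is_involution (R : pzRingType) (star : R -> R) : Prop :=
  [/\ forall x y, star (x + y) = star x + star y,
      forall x y, star (x * y) = star y * star x
    & forall x, star (star x) = x].

Definition is_left_dual_v_core_inverse (R : pzRingType) (star : R -> R)
  (a v x : R) : Prop :=
  [/\ a * x * v * a = a, star (x * v * a) = x * v * a & x ^+ 2 * v * a = x].

Definition left_dual_v_core_invertible (R : pzRingType) (star : R -> R)
  (a v : R) : Prop := exists x, is_left_dual_v_core_inverse star a v x.

Definition is_left_dual_core_inverse (R : pzRingType) (star : R -> R)
  (y z : R) : Prop :=
  [/\ y * z * y = y, star (z * y) = z * y & z ^+ 2 * y = z].

Definition left_dual_core_invertible (R : pzRingType) (star : R -> R)
  (y : R) : Prop := exists z, is_left_dual_core_inverse star y z.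

From mathcomp Require Import all_boot all_algebra.
Set Implicit Arguments. Unset Strict Implicit. Unset Printing Implicit Defensive.
Import GRing.Theory.
Local Open Scope ring_scope.

(* A left dual v-core inverse x of a is a left dual core inverse of b := va,
   and p := xb is a self-adjoint idempotent with bp = b and xp = x.  Split
   b = pb + (1 - p)b.  Since x(pb) = p, x is a left dual core inverse of pb.
   The identity b(1 - p) = 0 kills ((1 - p)b)^2 and pb(1 - p)b, while
   p(1 - p) = 0 together with p* = p gives star((1 - p)b) pb = 0. *)

Lemma involution_star0 (R : pzRingType) (star : R -> R) :
  is_involution star -> star 0 = 0.
Proof.
case=> starD _ _; have := starD 0 0.
by rewrite addr0 -{1}[star 0]addr0 => /addrI <-.
Qed.

Lemma left_dual_v_core_inverse_mulr (R : pzRingType) (star : R -> R)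
  (a v x : R) :
  is_left_dual_v_core_inverse star a v x ->
  is_left_dual_core_inverse star (v * a) x.
Proof.
case=> axva xva_sym xxva; split; rewrite ?mulrA //.
by rewrite -[in RHS]axva !mulrA.
Qed.

Section LeftDualCoreDecomposition.

Variables (R : pzRingType) (star : R -> R) (b x : R).
Hypotheses (bxb : b * x * b = b) (xb_sym : star (x * b) = x * b)
  (xxb : x ^+ 2 * b = x).

Lemma mulr_b_xb : b * (x * b) = b.
Proof. by rewrite mulrA. Qed.

Lemma mulr_x_xb : x * (x * b) = x.
Proof. by rewrite mulrA -expr2. Qed.

Lemma mulr_b_1Bxb : b * (1 - x * b) = 0.
Proof. by rewrite mulrBr mulr1 mulr_b_xb subrr. Qed.

Lemma mulr_xb_1Bxb : x * b * (1 - x * b) = 0.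
Proof. by rewrite -mulrA mulr_b_1Bxb mulr0. Qed.

Lemma core_partE : x * b ^+ 2 = x * b * b.
Proof. by rewrite expr2 mulrA. Qed.

Lemma nil_partE : b - x * b ^+ 2 = (1 - x * b) * b.
Proof. by rewrite mulrBl mul1r core_partE. Qed.

Lemma mulr_x_core_part : x * (x * b ^+ 2) = x * b.
Proof. by rewrite core_partE mulrA mulr_x_xb. Qed.

Lemma core_part_mulr_xb : x * b ^+ 2 * (x * b) = x * b ^+ 2.
Proof. by rewrite core_partE -(mulrA (x * b) b) mulr_b_xb. Qed.

Lemma core_part_left_dual_core_inverse :
  is_left_dual_core_inverse star (x * b ^+ 2) x.
Proof.
split.
- by rewrite -mulrA mulr_x_core_part core_part_mulr_xb.
- by rewrite mulr_x_core_part.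
- by rewrite expr2 -mulrA mulr_x_core_part mulr_x_xb.
Qed.

Lemma nil_part_sqr : (b - x * b ^+ 2) ^+ 2 = 0.
Proof.
by rewrite nil_partE expr2 -mulrA (mulrA b) mulr_b_1Bxb mul0r mulr0.
Qed.

Lemma core_part_mulr_nil_part : x * b ^+ 2 * (b - x * b ^+ 2) = 0.
Proof.
by rewrite nil_partE core_partE mulrA -(mulrA (x * b) b) mulr_b_1Bxb mulr0 mul0r.
Qed.

Lemma star_nil_part_mulr_core_part :
  is_involution star -> star (b - x * b ^+ 2) * (x * b ^+ 2) = 0.
Proof.
move=> invol; have [_ starM _] := invol.
rewrite nil_partE core_partE mulrA -{2}xb_sym -starM mulrA.
by rewrite mulr_xb_1Bxb mul0r (involution_star0 invol) mul0r.
Qed.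

Lemma left_dual_core_decomposition :
  is_involution star ->
  exists a1 a2 : R,
    [/\ b = a1 + a2, left_dual_core_invertible star a1, a2 ^+ 2 = 0,
        star a2 * a1 = 0 & a1 * a2 = 0].
Proof.
move=> invol; exists (x * b ^+ 2), (b - x * b ^+ 2); split.
- by rewrite addrC subrK.
- by exists x; apply: core_part_left_dual_core_inverse.
- exact: nil_part_sqr.
- exact: star_nil_part_mulr_core_part.
- exact: core_part_mulr_nil_part.
Qed.

End LeftDualCoreDecomposition.

Theorem theorem3p3 (R : pzRingType) (star : R -> R)
  (Hstar : is_involution star) (a v : R)
  (Ha : left_dual_v_core_invertible star a v) :
  (exists a1 a2 : R,
     [/\ v * a = a1 + a2,
         left_dual_core_invertible star a1,
         a2 ^+ 2 = 0,
         star a2 * a1 = 0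
       & a1 * a2 = 0])
  /\
  (forall x : R, is_left_dual_v_core_inverse star a v x ->
     left_dual_core_invertible star (x * (v * a) ^+ 2) /\
     is_left_dual_core_inverse star (x * (v * a) ^+ 2) x).
Proof.
split.
- case: Ha => x /left_dual_v_core_inverse_mulr [bxb xb_sym xxb].
  exact: left_dual_core_decomposition bxb xb_sym xxb Hstar.
- move=> x /left_dual_v_core_inverse_mulr [bxb xb_sym xxb].
  have core := core_part_left_dual_core_inverse bxb xb_sym xxb.
  by split; first exists x.
Qed.
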